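(* For integers $2\le n\le m$, $$\gamma^{LD}(K_n\times K_m)=\begin{cases} m-1, & 2n\le m \text{ and } (n,m)\ne(2,4),\\ \left\lceil \frac{2n+2m-1}{3}\right\rceil-1, & 2<n\le m<2n \text{ and } (n,m)\ne(4,4),\\ m, & n=2,\ m\le 4,\\ 5, & n=m=4.\end{cases}$$
   Context: $K_q$ is the complete graph on vertex set $\{1,\dots,q\}$. The direct product $G_1\times G_2$ has vertex set $V_1\times V_2$, with $(u_1,u_2)$ adjacent to $(v_1,v_2)$ iff $u_1v_1\in E_1$ and $u_2v_2\in E_2$. For a code (nonempty vertex subset) $C$ and vertex $v$, $I(C;v)=N[v]\cap C$, where $N[v]$ is the closed neighbourhood. A code $C$ is locating-dominating if for all distinct non-codewords $u,v$, $I(C;u)\ne\emptyset$ and $I(C;u)\ne I(C;v)$. $\gamma^{LD}(G)$ is the minimum size of a locating-dominating code in $G$. *)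

From mathcomp Require Import all_boot.
Set Implicit Arguments. Unset Strict Implicit. Unset Printing Implicit Defensive.

Definition closed_nbhd (T : finType) (adj : rel T) (v : T) : {set T} :=
  [set u | (u == v) || adj v u].

Definition Iset (T : finType) (adj : rel T) (C : {set T}) (v : T) : {set T} :=
  closed_nbhd adj v :&: C.

Definition locating_dominating (T : finType) (adj : rel T) (C : {set T}) : bool :=
  [&& C != set0,
      [forall u, (u \notin C) ==> (Iset adj C u != set0)] &
      [forall u, forall v, [&& u \notin C, v \notin C & u != v] ==>
                             (Iset adj C u != Iset adj C v)]].

(* gamma^LD(G): minimum size of a locating-dominating code
   (the default #|T| is never the strict minimizer issue: setT is LD when T nonempty). *)
Definition gammaLD (T : finType) (adj : rel T) : nat :=
  \big[minn/#|T|]_(C : {set T} | locating_dominating adj C) #|C|.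

Definition K_adj (q : nat) : rel 'I_q := fun i j => i != j.

Definition direct_prod_adj (T1 T2 : finType) (a1 : rel T1) (a2 : rel T2) : rel (T1 * T2) :=
  fun x y => a1 x.1 y.1 && a2 x.2 y.2.

Definition KxK (n m : nat) : rel ('I_n * 'I_m) :=
  direct_prod_adj (@K_adj n) (@K_adj m).
Arguments KxK : clear implicits.

(* Two non-codewords u and v of K_n x K_m have the same trace iff the codewords
   on the cross (row and column) of u are those on the cross of v.  Analysing
   this shows that C is locating-dominating iff every non-codeword has a
   codeword outside its row and its column, at most one row and at most one
   column are empty, at most one codeword is isolated (alone in its row and in
   its column), and an isolated codeword never coexists with both an empty row
   and an empty column.

   Lower bounds: a nonempty row holds one codeword or at least two, so
   2 (n - e_r) <= |C| + |A|, where e_r counts the empty rows and A is the set of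
   codewords alone in their row.  Adding the same count for columns (with B)
   and using |A u B| <= |C| together with the restrictions above gives
   2n + 2m <= 3|C| + 4, while counting nonempty columns gives |C| >= m - 1.
   K_2 x K_m and K_4 x K_4 need a finer look at these counts.

   Upper bounds: place along the diagonal a horizontal pairs, b vertical pairs
   and a horizontal bar of w cells, in pairwise disjoint rows and columns;
   choosing a, b, w according to (n + m) mod 3 uses all rows but at most one
   and all columns but one.  Once there are three blocks, every cell misses a
   whole block and is dominated by it.  The remaining small grids get explicit
   codes, checked by computation. *)

From mathcomp Require Import all_boot zify.
Set Implicit Arguments. Unset Strict Implicit. Unset Printing Implicit Defensive.

Lemma big_minn_le (I : eqType) (r : seq I) (P : pred I) (F : I -> nat) x i0 :
  i0 \in r -> P i0 -> \big[minn/x]_(i <- r | P i) F i <= F i0.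
Proof.
elim: r => // i r IH; rewrite inE big_cons => /predU1P [<- -> | i0r Pi0]; first exact: geq_minl.
by case: (P i); [apply: leq_trans (geq_minr _ _) (IH i0r Pi0) | exact: IH].
Qed.

Lemma gammaLD_eq (T : finType) (adj : rel T) k :
  (exists2 C, locating_dominating adj C & #|C| = k) ->
  (forall C, locating_dominating adj C -> k <= #|C|) -> gammaLD adj = k.
Proof.
move=> [C ldC <-] lb; apply/eqP; rewrite eqn_leq; apply/andP; split.
  by apply: big_minn_le ldC; rewrite mem_index_enum.
apply: (big_ind (fun x => #|C| <= x)) => [||D /lb] //; first exact: max_card.
by move=> x y; rewrite leq_min => -> ->.
Qed.

Section Characterization.
Variables n m : nat.
Local Notation T := ('I_n * 'I_m)%type.
Local Notation adj := (KxK n m).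
Implicit Types (C : {set T}) (u v x y : T).

Lemma KxKE u v : adj u v = (u.1 != v.1) && (u.2 != v.2).
Proof. by []. Qed.

Lemma Iset_KxK C v : v \notin C -> Iset adj C v = [set x in C | adj v x].
Proof.
move=> vNC; apply/setP=> x; rewrite !inE andbC.
by case: eqVneq => [->|_]; rewrite ?(negbTE vNC).
Qed.

Lemma eq_IsetP C u v : u \notin C -> v \notin C ->
  reflect {in C, adj u =1 adj v} (Iset adj C u == Iset adj C v).
Proof.
move=> uNC vNC; rewrite !Iset_KxK //; apply: (iffP eqP) => [E x xC | E].
  by move/setP/(_ x): E; rewrite !inE xC.
by apply/setP=> x; rewrite !inE; case: (boolP (x \in C)) => // /E ->.
Qed.

Definition empty_row C (r : 'I_n) := forall c, (r, c) \notin C.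
Definition empty_col C (c : 'I_m) := forall r, (r, c) \notin C.
Definition isolated C x := x \in C /\ {in C, forall y, ~~ adj x y -> y = x}.

Lemma empty_row_neq C r x : empty_row C r -> x \in C -> x.1 != r.
Proof. by move=> hr; apply: contraTneq => xr; rewrite [x]surjective_pairing xr hr. Qed.

Lemma empty_col_neq C c x : empty_col C c -> x \in C -> x.2 != c.
Proof. by move=> hc; apply: contraTneq => xc; rewrite [x]surjective_pairing xc hc. Qed.

Lemma isolated_adj C x : isolated C x -> {in C, forall y, adj x y = (y != x)}.
Proof.
move=> [_ isox] y yC; case: eqVneq => [->|yx]; first by rewrite KxKE !eqxx.
by apply/negbNE; apply: contra_neqN yx; exact: isox.
Qed.

Section Agreement.
Variables (C : {set T}) (u v : T).
Hypothesis agree : {in C, adj u =1 adj v}.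

Lemma agree_same_row : u \notin C -> u.1 = v.1 -> u.2 != v.2 -> empty_col C u.2.
Proof.
move=> uNC uv1 ne2 r; apply: contra uNC => rC.
move: (agree rC); rewrite !KxKE /= eqxx andbF [v.2 == _]eq_sym (negbTE ne2) andbT.
by move=> /esym/negbFE/eqP vr; rewrite [u]surjective_pairing uv1 vr.
Qed.

Lemma agree_same_col : u \notin C -> u.2 = v.2 -> u.1 != v.1 -> empty_row C u.1.
Proof.
move=> uNC uv2 ne1 c; apply: contra uNC => cC.
move: (agree cC); rewrite !KxKE /= eqxx [v.1 == _]eq_sym (negbTE ne1) /=.
by move=> /esym/negbFE/eqP vc; rewrite [u]surjective_pairing uv2 vc.
Qed.

Lemma agree_corner : u.1 != v.1 -> u.2 != v.2 ->
  {in C, forall y, ~~ adj (u.1, v.2) y -> y = (u.1, v.2)}.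
Proof.
move=> ne1 ne2 y yC; move: (agree yC); rewrite !KxKE /= negb_and !negbK.
move=> E /orP [] /eqP yrow; move: E; rewrite -yrow eqxx /=.
  rewrite eq_sym (negbTE ne1) /= => /esym/negbFE/eqP vy.
  by rewrite [y]surjective_pairing -yrow vy.
rewrite ne2 andbF andbT => /negbFE/eqP uy.
by rewrite [y]surjective_pairing -yrow uy.
Qed.

End Agreement.

Lemma isolated_or_empty_lines C p : {in C, forall y, ~~ adj p y -> y = p} ->
  isolated C p \/ empty_row C p.1 /\ empty_col C p.2.
Proof.
move=> lonely; have [pC|pNC] := boolP (p \in C); [left | right] => //.
split=> [c|r]; apply: contra pNC => hC; rewrite -(lonely _ hC) //;
  by rewrite KxKE /= eqxx ?andbF.
Qed.

Lemma locating_dominating_KxK C : 0 < n -> 0 < m ->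
  (forall r r', empty_row C r -> empty_row C r' -> r = r') ->
  (forall c c', empty_col C c -> empty_col C c' -> c = c') ->
  (forall x y, isolated C x -> isolated C y -> x = y) ->
  (forall x r c, isolated C x -> empty_row C r -> empty_col C c -> False) ->
  (forall v, v \notin C -> exists2 x, x \in C & adj v x) ->
  locating_dominating adj C.
Proof.
move=> n0 m0 rowsC colsC isoC iso_linesC domC; apply/and3P; split.
- apply/set0Pn; have [x0C|/domC [x xC _]] := boolP ((Ordinal n0, Ordinal m0) \in C).
    by exists (Ordinal n0, Ordinal m0).
  by exists x.
- apply/forallP => v; apply/implyP => /[dup] vNC /domC [x xC vx].
  by rewrite Iset_KxK //; apply/set0Pn; exists x; rewrite inE xC.
apply/forallP => u; apply/forallP => v; apply/implyP => /and3P [uNC vNC].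
apply: contra_neqN => /(eq_IsetP uNC vNC) agree.
have agree' : {in C, adj v =1 adj u} by move=> x /agree.
have [e1|ne1] := eqVneq u.1 v.1; have [e2|ne2] := eqVneq u.2 v.2.
- by rewrite [u]surjective_pairing e1 e2 -surjective_pairing.
- have ne2' : v.2 != u.2 by rewrite eq_sym.
  have := colsC _ _ (agree_same_row agree uNC e1 ne2) (agree_same_row agree' vNC (esym e1) ne2').
  by move/eqP; rewrite (negbTE ne2).
- have ne1' : v.1 != u.1 by rewrite eq_sym.
  have := rowsC _ _ (agree_same_col agree uNC e2 ne1) (agree_same_col agree' vNC (esym e2) ne1').
  by move/eqP; rewrite (negbTE ne1).
have [ne1' ne2'] : v.1 != u.1 /\ v.2 != u.2 by rewrite ![v.1 == _]eq_sym ![v.2 == _]eq_sym.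
case: (isolated_or_empty_lines (agree_corner agree ne1 ne2)) => [isop|[rowu colv]];
  case: (isolated_or_empty_lines (agree_corner agree' ne1' ne2')) => [isoq|[rowv colu]].
- by move: (isoC _ _ isop isoq) => /(congr1 fst) /= /eqP; rewrite (negbTE ne1).
- by case: (iso_linesC _ _ _ isop rowv colu).
- by case: (iso_linesC _ _ _ isoq rowu colv).
- by move/eqP: (rowsC _ _ rowu rowv); rewrite (negbTE ne1).
Qed.

Section Necessary.
Variable C : {set T}.
Hypothesis ldC : locating_dominating adj C.

Lemma ld_adj_codeword v : v \notin C -> exists2 x, x \in C & adj v x.
Proof.
case/and3P: ldC => _ /forallP /(_ v) /implyP dom _ vNC.
by case/set0Pn: (dom vNC) => x; rewrite Iset_KxK // inE => /andP []; exists x.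
Qed.

Lemma ld_separates u v : u \notin C -> v \notin C -> {in C, adj u =1 adj v} -> u = v.
Proof.
case/and3P: ldC => _ _ /forallP /(_ u) /forallP /(_ v) sep uNC vNC agree.
apply: contraTeq sep => uv; rewrite uNC vNC uv negbK; exact/eq_IsetP.
Qed.

Lemma ld_empty_col_eq c c' : 0 < n -> empty_col C c -> empty_col C c' -> c = c'.
Proof.
move=> n0 hc hc'; pose r0 := Ordinal n0.
suff [] : (r0, c) = (r0, c') by [].
apply: ld_separates (hc r0) (hc' r0) _ => x xC.
by rewrite !KxKE /= ![_ == x.2]eq_sym (empty_col_neq hc xC) (empty_col_neq hc' xC).
Qed.

Lemma ld_empty_row_eq r r' : 0 < m -> empty_row C r -> empty_row C r' -> r = r'.
Proof.
move=> m0 hr hr'; pose c0 := Ordinal m0.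
suff [] : (r, c0) = (r', c0) by [].
apply: ld_separates (hr c0) (hr' c0) _ => x xC.
by rewrite !KxKE /= ![_ == x.1]eq_sym (empty_row_neq hr xC) (empty_row_neq hr' xC).
Qed.

Lemma ld_isolated_eq x y : isolated C x -> isolated C y -> x = y.
Proof.
move=> isox isoy; have [[xC _] [yC _]] := (isox, isoy).
have [adjx adjy] := (isolated_adj isox, isolated_adj isoy).
case: (eqVneq x y) => // xy; exfalso.
have /andP [ne1 ne2] : (x.1 != y.1) && (x.2 != y.2) by rewrite -KxKE adjx // eq_sym.
have uNC : (x.1, y.2) \notin C.
  apply/negP => uC; move: (adjx _ uC); rewrite KxKE /= eqxx /= => /esym/negbFE/eqP.
  by move/(congr1 snd) => /= yx2; rewrite yx2 eqxx in ne2.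
have vNC : (y.1, x.2) \notin C.
  apply/negP => vC; move: (adjy _ vC); rewrite KxKE /= eqxx /= => /esym/negbFE/eqP.
  by move/(congr1 snd) => /= xy2; rewrite xy2 eqxx in ne2.
suff /(congr1 fst) /= xy1 : (x.1, y.2) = (y.1, x.2) by rewrite xy1 eqxx in ne1.
apply: ld_separates uNC vNC _ => z zC.
case: (eqVneq z x) => [->|zx]; first by rewrite !KxKE /= !eqxx andbF.
case: (eqVneq z y) => [->|zy]; first by rewrite !KxKE /= !eqxx andbF.
move: (adjx z zC) (adjy z zC); rewrite !KxKE zx zy /=.
by move=> /andP [-> ->] /andP [-> ->].
Qed.

Lemma ld_isolated_empty_lines x r c :
  isolated C x -> empty_row C r -> empty_col C c -> False.
Proof.
move=> isox hr hc; have [xC _] := isox.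
suff /(congr1 fst) /= xr : (x.1, c) = (r, x.2) by case/eqP: (empty_row_neq hr xC).
apply: ld_separates (hc x.1) (hr x.2) _ => z zC.
rewrite !KxKE /= [c == _]eq_sym [r == _]eq_sym (empty_row_neq hr zC) (empty_col_neq hc zC) andbT.
case: (eqVneq z x) => [->|zx]; first by rewrite !eqxx.
by move: (isolated_adj isox zC); rewrite KxKE zx => /andP [-> ->].
Qed.

End Necessary.
End Characterization.

Section Fibres.
Variables (T I : finType) (f : T -> I) (C : {set T}).

Definition fibre i := [set x in C | f x == i].

Lemma mem_fibre x : x \in C -> x \in fibre (f x).
Proof. by move=> xC; rewrite inE xC eqxx. Qed.

Lemma sum_card_fibre : \sum_i #|fibre i| = #|C|.
Proof.
rewrite -sum1_card (partition_big f predT) //=; apply: eq_bigr => i _.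
by rewrite -sum1_card; apply: eq_bigl => x; rewrite inE.
Qed.

Lemma card_lone : #|[set x in C | #|fibre (f x)| == 1]| = \sum_i (#|fibre i| == 1).
Proof.
rewrite -sum1_card (partition_big f predT) //=; apply: eq_bigr => i _.
rewrite (eq_bigl (fun x => (#|fibre i| == 1) && (x \in fibre i))); last first.
  move=> x; rewrite !inE; apply/idP/idP.
    by case/andP => /andP [xC c1] /eqP <-; rewrite c1 xC eqxx.
  by case/and3P => c1 xC /eqP fxi; rewrite fxi xC c1 eqxx.
by case: eqP => [card1|_] /=; [rewrite sum1_card card1 | rewrite big_pred0].
Qed.

Lemma double_card_imset : 2 * #|f @: C| <= #|C| + #|[set x in C | #|fibre (f x)| == 1]|.
Proof.
have mem_imset i : (i \in f @: C) = (0 < #|fibre i|).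
  apply/imsetP/card_gt0P => [[x xC ->] | [x]]; first by exists x; exact: mem_fibre.
  by rewrite inE => /andP [xC /eqP <-]; exists x.
have -> : #|f @: C| = \sum_i (0 < #|fibre i|).
  by rewrite -sum1_card big_mkcond /=; apply: eq_bigr => i _; rewrite mem_imset; case: (0 < _).
rewrite card_lone -sum_card_fibre big_distrr -big_split /=; apply: leq_sum => i _.
by case: #|fibre i| => [|[|k]].
Qed.

Lemma lone_fibre_eq i x y : #|fibre i| == 1 -> x \in fibre i -> y \in fibre i -> x = y.
Proof. by move/eqP/eq_leq/card_le1_eqP => fibre1 xi yi; exact: fibre1. Qed.

Lemma fibre_gt1 : #|f @: C| < #|C| -> exists i, 1 < #|fibre i|.
Proof.
move=> ltC; apply/existsP; apply: contraTT ltC => /existsPn small.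
rewrite -leqNgt card_in_imset // => x y xC yC fxy.
have : #|fibre (f x)| <= 1 by rewrite leqNgt small.
by move/card_le1_eqP; apply; rewrite ?mem_fibre // fxy mem_fibre.
Qed.

End Fibres.

Section LowerBound.
Variables (n m : nat) (C : {set 'I_n * 'I_m}).
Hypotheses (n0 : 0 < n) (m0 : 0 < m).
Hypothesis ldC : locating_dominating (KxK n m) C.

Local Notation rows := (fst @: C).
Local Notation cols := (snd @: C).
Local Notation row_lone := [set x in C | #|fibre fst C x.1| == 1].
Local Notation col_lone := [set x in C | #|fibre snd C x.2| == 1].

Lemma empty_row_notin r : r \notin rows -> empty_row C r.
Proof. by move=> rN c; apply: contra rN => rcC; apply/imsetP; exists (r, c). Qed.

Lemma empty_col_notin c : c \notin cols -> empty_col C c.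
Proof. by move=> cN r; apply: contra cN => rcC; apply/imsetP; exists (r, c). Qed.

Lemma card_empty_rows : #|~: rows| <= 1.
Proof.
apply/card_le1_eqP => r r'; rewrite !inE => /empty_row_notin hr /empty_row_notin hr'.
exact: (ld_empty_row_eq ldC m0 hr' hr).
Qed.

Lemma card_empty_cols : #|~: cols| <= 1.
Proof.
apply/card_le1_eqP => c c'; rewrite !inE => /empty_col_notin hc /empty_col_notin hc'.
exact: (ld_empty_col_eq ldC n0 hc' hc).
Qed.

Lemma lone_isolated x : x \in row_lone :&: col_lone -> isolated C x.
Proof.
rewrite !inE => /andP [/andP [xC row1] /andP [_ col1]]; split=> // y yC.
rewrite KxKE negb_and !negbK => /orP [] /eqP e.
  by apply: lone_fibre_eq row1 _ _; rewrite inE ?xC ?yC -?e eqxx.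
by apply: lone_fibre_eq col1 _ _; rewrite inE ?xC ?yC -?e eqxx.
Qed.

Lemma card_isolated : #|row_lone :&: col_lone| <= 1.
Proof.
apply/card_le1_eqP => x y /lone_isolated isox /lone_isolated isoy.
exact: (ld_isolated_eq ldC isoy isox).
Qed.

Lemma ld_defect_le4 : #|row_lone :&: col_lone| + 2 * #|~: rows| + 2 * #|~: cols| <= 4.
Proof.
have := card_isolated; have := card_empty_rows; have := card_empty_cols.
have : ~ (0 < #|row_lone :&: col_lone| /\ 0 < #|~: rows| /\ 0 < #|~: cols|).
  case=> /card_gt0P [x /lone_isolated isox] [/card_gt0P [r rN] /card_gt0P [c cN]].
  move: rN cN; rewrite !inE => /empty_row_notin hr /empty_col_notin hc.
  exact: (ld_isolated_empty_lines ldC isox hr hc).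
lia.
Qed.

Lemma ld_count :
  2 * n + 2 * m + #|C :\: (row_lone :|: col_lone)| <=
  3 * #|C| + #|row_lone :&: col_lone| + 2 * #|~: rows| + 2 * #|~: cols|.
Proof.
have rows2 : 2 * #|rows| <= #|C| + #|row_lone| := double_card_imset _ _.
have cols2 : 2 * #|cols| <= #|C| + #|col_lone| := double_card_imset _ _.
have rowsC : #|rows| + #|~: rows| = n by rewrite cardsC card_ord.
have colsC : #|cols| + #|~: cols| = m by rewrite cardsC card_ord.
have loneUI : #|row_lone :|: col_lone| + #|row_lone :&: col_lone| = #|row_lone| + #|col_lone|.
  exact: cardsUI.
have loneC : row_lone :|: col_lone \subset C.
  by apply/subsetP => x; rewrite !inE => /orP [] /andP [].
have loneD : #|C :\: (row_lone :|: col_lone)| = #|C| - #|row_lone :|: col_lone| := cardsDS loneC.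
have := subset_leq_card loneC.
lia.
Qed.

Lemma ld_card_lb_lines : 2 * n + 2 * m <= 3 * #|C| + 4.
Proof. have := ld_count; have := ld_defect_le4; lia. Qed.

Lemma ld_card_lb_cols : m - 1 <= #|C|.
Proof.
have colsC : #|cols| + #|~: cols| = m by rewrite cardsC card_ord.
have cols_le : #|cols| <= #|C| := leq_imset_card _ _.
have := card_empty_cols; lia.
Qed.

Lemma ld_card_lb_4x4 : n = 4 -> m = 4 -> 4 < #|C|.
Proof.
(* With four codewords [ld_count] is tight, which leaves a row r and a column c
   with two codewords each, each codeword alone in its row or its column; so
   (r, c) is no codeword, and the codeword dominating it is a fifth one. *)
move=> n4 m4; rewrite ltnNge; apply/negP => C4.
have [noD rows_lt cols_lt] :
    [/\ #|C :\: (row_lone :|: col_lone)| = 0, #|rows| < #|C| & #|cols| < #|C|].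
  have rowsC : #|rows| + #|~: rows| = n by rewrite cardsC card_ord.
  have colsC : #|cols| + #|~: cols| = m by rewrite cardsC card_ord.
  have := ld_count; have := ld_defect_le4; have := ld_card_lb_lines.
  have := card_empty_rows; have := card_empty_cols; have := card_isolated.
  by split; lia.
have [r r2] := fibre_gt1 rows_lt; have [c c2] := fibre_gt1 cols_lt.
have rcNC : (r, c) \notin C.
  apply/negP => rcC; suff : 0 < #|C :\: (row_lone :|: col_lone)| by rewrite noD.
  apply/card_gt0P; exists (r, c).
  by rewrite !inE rcC /= (gtn_eqF r2) (gtn_eqF c2).
have [z zC] := ld_adj_codeword ldC rcNC; rewrite KxKE /= => /andP [rz cz].
have cross0 : fibre fst C r :&: fibre snd C c = set0.
  apply/setP => x; rewrite !inE; apply: contraNF rcNC.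
  by case/andP => /andP [xC /eqP <-] /andP [_ /eqP <-]; rewrite -surjective_pairing.
have zN : z \notin fibre fst C r :|: fibre snd C c.
  by rewrite !inE zC /= ![_ == r]eq_sym ![_ == c]eq_sym (negbTE rz) (negbTE cz).
have sub : z |: (fibre fst C r :|: fibre snd C c) \subset C.
  by apply/subsetP => x; rewrite !inE => /or3P [/eqP -> | /andP [] | /andP []].
suff : 4 < #|C| by rewrite ltnNge C4.
apply: leq_trans (subset_leq_card sub).
by rewrite cardsU1 zN cardsU cross0 cards0 subn0 add1n ltnS (leq_add r2 c2).
Qed.

End LowerBound.

Lemma ord2_eq (i j k : 'I_2) : i != k -> j != k -> i = j.
Proof. by case: i j k => [[|[|?]] ?] [[|[|?]] ?] [[|[|?]] ?] //= _ _; apply: val_inj. Qed.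

Lemma ld_card_lb_2xm m (C : {set 'I_2 * 'I_m}) :
  locating_dominating (KxK 2 m) C -> #|C| < m -> 3 < #|C|.
Proof.
(* One column s is empty and the others hold one codeword each.  For rows
   r != r', the codeword z dominating (r', s) and the one dominating (r', z.2)
   are two codewords in row r. *)
move=> ldC ltCm; have m0 : 0 < m := leq_ltn_trans (leq0n _) ltCm.
have colsC : #|snd @: C| + #|~: (snd @: C)| = m by rewrite cardsC card_ord.
have cols_le : #|snd @: C| <= #|C| := leq_imset_card _ _.
have empty1 : #|~: (snd @: C)| <= 1 := card_empty_cols (ltn0Sn 1) ldC.
have /imset_injP inj : #|snd @: C| == #|C| by lia.
have /card_gt0P [s] : 0 < #|~: (snd @: C)| by lia.
rewrite inE => /empty_col_notin col_s.
have row2 (r r' : 'I_2) : r != r' -> 1 < #|fibre fst C r|.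
  move=> rr'; have [z zC] := ld_adj_codeword ldC (col_s r').
  rewrite KxKE /= => /andP [r'z _].
  have zr : z.1 = r by apply: (ord2_eq (k := r')); rewrite // eq_sym.
  have r'zNC : (r', z.2) \notin C.
    by apply/negP => /inj /(_ zC erefl) /(congr1 fst) /= r'z1; rewrite r'z1 eqxx in r'z.
  have [w wC] := ld_adj_codeword ldC r'zNC; rewrite KxKE /= => /andP [r'w zw].
  have wr : w.1 = r by apply: (ord2_eq (k := r')); rewrite // eq_sym.
  apply/card_gt1P; exists z, w; rewrite !inE zC wC zr wr eqxx; split=> //.
  by apply: contraNneq zw => ->.
have sumC : #|fibre fst C ord0| + #|fibre fst C ord_max| = #|C|.
  rewrite -(sum_card_fibre fst C) big_ord_recl big_ord1.
  by congr (_ + #|fibre _ _ _|); apply: val_inj.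
have := row2 ord0 ord_max isT; have := row2 ord_max ord0 isT; lia.
Qed.

Definition apart (p q : nat * nat) := (p.1 != q.1) && (p.2 != q.2).

Definition lone (s : seq (nat * nat)) p := all (fun q => (q == p) || apart p q) s.

Definition well_placed n m (s : seq (nat * nat)) :=
  uniq s && all (fun p => (p.1 < n) && (p.2 < m)) s.

(* The hypotheses of [locating_dominating_KxK] for the code whose cells are
   listed in [s], the last row and the last column being the only lines allowed
   to be empty; as a boolean it is decided by computation for small grids. *)
Definition ld_certificate n m (s : seq (nat * nat)) := [&&
  all (fun r => has (fun p => p.1 == r) s) (iota 0 n.-1),
  all (fun c => has (fun p => p.2 == c) s) (iota 0 m.-1),
  all (fun p => all (fun q => lone s p && lone s q ==> (p == q)) s) s,
  all (fun p => lone s p ==> has (fun q => q.1 == n.-1) s || has (fun q => q.2 == m.-1) s) s &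
  all (fun r => all (fun c => ((r, c) \in s) || has (apart (r, c)) s) (iota 0 m)) (iota 0 n)].

Section CodeOfCells.
Variables (n m : nat) (s : seq (nat * nat)).
Local Notation T := ('I_n * 'I_m)%type.

Definition coords (x : T) : nat * nat := (x.1 : nat, x.2 : nat).

Definition code_of : {set T} := [set x | coords x \in s].

Lemma mem_code_of x : (x \in code_of) = (coords x \in s).
Proof. by rewrite inE. Qed.

Lemma coords_inj : injective coords.
Proof. by move=> [x1 x2] [y1 y2] [/val_inj -> /val_inj ->]. Qed.

Lemma KxK_apart x y : KxK n m x y = apart (coords x) (coords y).
Proof. by []. Qed.

Hypothesis placed_s : well_placed n m s.

Lemma coords_code_of p : p \in s -> exists2 x, x \in code_of & coords x = p.
Proof.
case/andP: placed_s => _ /allP inside ps; have /andP [p1 p2] := inside p ps.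
by exists (Ordinal p1, Ordinal p2); rewrite ?mem_code_of /coords /= -?surjective_pairing.
Qed.

Lemma code_of_row_nonempty (r : 'I_n) p : p \in s -> p.1 = r -> ~ empty_row code_of r.
Proof.
move=> ps pr hr; have [x xC xp] := coords_code_of ps; case/negP: (hr x.2).
suff -> : (r, x.2) = x by [].
by rewrite [x]surjective_pairing; congr pair; apply: val_inj; rewrite /= -pr -xp.
Qed.

Lemma code_of_col_nonempty (c : 'I_m) p : p \in s -> p.2 = c -> ~ empty_col code_of c.
Proof.
move=> ps pc hc; have [x xC xp] := coords_code_of ps; case/negP: (hc x.1).
suff -> : (x.1, c) = x by [].
by rewrite [x]surjective_pairing; congr pair; apply: val_inj; rewrite /= -pc -xp.
Qed.

Hypothesis cert_s : ld_certificate n m s.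

Lemma empty_row_code_of r : empty_row code_of r -> r = n.-1 :> nat.
Proof.
case/and5P: cert_s => /allP rows_hit _ _ _ _ hr; have := ltn_ord r.
case: (ltnP r n.-1) => [r_lt _|]; last by lia.
have /hasP [p ps /eqP pr] : has (fun p => p.1 == val r) s by apply: rows_hit; rewrite mem_iota.
by case: (code_of_row_nonempty ps pr hr).
Qed.

Lemma empty_col_code_of c : empty_col code_of c -> c = m.-1 :> nat.
Proof.
case/and5P: cert_s => _ /allP cols_hit _ _ _ hc; have := ltn_ord c.
case: (ltnP c m.-1) => [c_lt _|]; last by lia.
have /hasP [p ps /eqP pc] : has (fun p => p.2 == val c) s by apply: cols_hit; rewrite mem_iota.
by case: (code_of_col_nonempty ps pc hc).
Qed.

Lemma isolated_code_of x : isolated code_of x -> lone s (coords x).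
Proof.
case=> _ isox; apply/allP => q qs; have [y yC <-] := coords_code_of qs.
rewrite (inj_eq coords_inj) -KxK_apart.
by case: (boolP (KxK n m x y)) => [_|/(isox y yC) ->]; rewrite ?orbT ?eqxx.
Qed.

Lemma ld_code_of : 0 < n -> 0 < m -> locating_dominating (KxK n m) code_of.
Proof.
move=> n0 m0; case/and5P: cert_s => _ _ /allP lone_eq /allP lone_lines /allP dom.
apply: locating_dominating_KxK => //.
- by move=> r r' /empty_row_code_of hr /empty_row_code_of hr'; apply: val_inj; rewrite /= hr hr'.
- by move=> c c' /empty_col_code_of hc /empty_col_code_of hc'; apply: val_inj; rewrite /= hc hc'.
- move=> x y isox isoy; apply: coords_inj; apply/eqP.
  have [[xC _] [yC _]] := (isox, isoy); rewrite !mem_code_of in xC yC.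
  by move: (lone_eq _ xC) => /allP /(_ _ yC); rewrite !isolated_code_of.
- move=> x r c isox hr hc; have [xC _] := isox; rewrite mem_code_of in xC.
  move: (lone_lines _ xC); rewrite isolated_code_of //= => /orP [] /hasP [q qs /eqP].
    by rewrite -(empty_row_code_of hr) => /(code_of_row_nonempty qs).
  by rewrite -(empty_col_code_of hc) => /(code_of_col_nonempty qs).
move=> v; rewrite mem_code_of => vN; move: (dom v.1); rewrite mem_iota ltn_ord.
move=> /(_ isT) /allP /(_ v.2); rewrite mem_iota ltn_ord -[(_, _)]/(coords v) (negbTE vN).
case/(_ isT)/hasP => q qs vq; have [y yC yq] := coords_code_of qs.
by exists y; rewrite // KxK_apart yq.
Qed.

End CodeOfCells.

Lemma card_code_of n m s : well_placed n m s -> #|code_of n m s| = size s.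
Proof.
elim: s => [_|p s IH placed_ps].
  by apply/eqP; rewrite cards_eq0; apply/eqP/setP => x; rewrite !inE.
have [x _ xp] := coords_code_of placed_ps (mem_head p s).
case/andP: placed_ps => /= /andP [pNs uniq_s] /andP [_ inside_s].
have -> : code_of n m (p :: s) = x |: code_of n m s.
  by apply/setP => y; rewrite !inE -xp (inj_eq (@coords_inj n m)).
by rewrite cardsU1 inE xp pNs IH // /well_placed uniq_s.
Qed.

Lemma exists_ld_code n m s : 0 < n -> 0 < m -> well_placed n m s -> ld_certificate n m s ->
  exists2 C : {set 'I_n * 'I_m}, locating_dominating (KxK n m) C & #|C| = size s.
Proof.
by move=> n0 m0 placed cert; exists (code_of n m s); [exact: ld_code_of | exact: card_code_of].
Qed.

(* [a] horizontal pairs, then [b] vertical pairs, then a horizontal bar of [w]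
   cells, along the diagonal: the code occupies rows [0 .. a + 2b + minn w 1)
   and columns [0 .. 2a + b + w). *)
Definition row_pairs a : seq (nat * nat) := [seq (i %/ 2, i) | i <- iota 0 (2 * a)].
Definition col_pairs a b : seq (nat * nat) := [seq (a + j, 2 * a + j %/ 2) | j <- iota 0 (2 * b)].
Definition row_bar a b w : seq (nat * nat) := [seq (a + 2 * b, 2 * a + b + k) | k <- iota 0 w].
Definition block_code a b w := row_pairs a ++ col_pairs a b ++ row_bar a b w.

(* A cell of the [t]-th block, the bar being block [a + b]. *)
Definition block_corner a t : nat * nat :=
  if t < a then (t, 2 * t) else (a + 2 * (t - a), a + t).

Section BlockCode.
Variables a b w : nat.
Local Notation s := (block_code a b w).

Lemma mem_row_pairs r c : ((r, c) \in row_pairs a) = (c < 2 * a) && (r == c %/ 2).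
Proof.
apply/mapP/andP => [[i] | [c_lt /eqP ->]]; last by exists c; rewrite ?mem_iota.
by rewrite mem_iota => i_lt [-> ->].
Qed.

Lemma mem_col_pairs r c :
  ((r, c) \in col_pairs a b) = (a <= r < a + 2 * b) && (c == 2 * a + (r - a) %/ 2).
Proof.
apply/mapP/andP => [[j] | [/andP [ar rb] /eqP ->]]; last first.
  by exists (r - a); rewrite ?mem_iota ?subnKC //; lia.
by rewrite mem_iota => j_lt [-> ->]; split; [lia | rewrite addKn].
Qed.

Lemma mem_row_bar r c :
  ((r, c) \in row_bar a b w) = (r == a + 2 * b) && (2 * a + b <= c < 2 * a + b + w).
Proof.
apply/mapP/andP => [[k] | [/eqP -> c_in]]; last first.
  by exists (c - (2 * a + b)); rewrite ?mem_iota ?subnKC //; lia.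
by rewrite mem_iota => k_lt [-> ->]; split=> //; lia.
Qed.

Lemma mem_block_code r c : ((r, c) \in s) =
  [|| (c < 2 * a) && (r == c %/ 2),
      (a <= r < a + 2 * b) && (c == 2 * a + (r - a) %/ 2) |
      (r == a + 2 * b) && (2 * a + b <= c < 2 * a + b + w)].
Proof. by rewrite !mem_cat mem_row_pairs mem_col_pairs mem_row_bar. Qed.

Lemma size_block_code : size s = 2 * a + 2 * b + w.
Proof. by rewrite !size_cat !size_map !size_iota addnA. Qed.

Lemma uniq_block_code : uniq s.
Proof.
rewrite !cat_uniq has_cat !map_inj_uniq ?iota_uniq /= => [|? ? []|? ? []|? ? []]; try lia.
rewrite andbT negb_or -andbA; apply/and3P; split; apply/hasPn => -[r c] /=;
  by rewrite ?mem_row_pairs ?mem_col_pairs ?mem_row_bar; lia.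
Qed.

Lemma lone_block_code r c :
  (r, c) \in s -> lone s (r, c) -> r = a + 2 * b /\ c = 2 * a + b /\ w = 1.
Proof.
move=> rcs /allP lone_rc.
have partner q : q \in s -> q != (r, c) -> apart (r, c) q.
  by move=> qs; move: (lone_rc q qs) => /orP [/eqP -> | //]; rewrite eqxx.
move: rcs; rewrite mem_block_code => /or3P [] rc_in.
(* the other cell of a pair, resp. another cell of the bar *)
- have := partner (r, c + 1 - 2 * (c %% 2)); rewrite mem_block_code xpair_eqE /apart /=; lia.
- have := partner (a + (r - a + 1 - 2 * ((r - a) %% 2)), c).
  rewrite mem_block_code xpair_eqE /apart /=; lia.
- have := partner (r, 2 * a + b + (c == 2 * a + b)).
  rewrite mem_block_code xpair_eqE /apart /=; lia.
Qed.

Lemma block_corner_in t : t < a + b + minn w 1 -> block_corner a t \in s.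
Proof. by rewrite /block_corner; case: ifP => ta tw; rewrite mem_block_code /=; lia. Qed.

Lemma block_corner_lt t t' : t < t' ->
  (block_corner a t).1 < (block_corner a t').1 /\ (block_corner a t).2 < (block_corner a t').2.
Proof. by rewrite /block_corner; case: ifP; case: ifP => /=; lia. Qed.

Lemma block_code_dominates x :
  3 <= a + b + minn w 1 \/ [/\ a = 1, b = 0 & 2 <= w] -> has (apart x) s.
Proof.
case=> [three | [a1 b0 w2]].
  (* a row and a column meet at most two of three blocks *)
  have lt01 := block_corner_lt (isT : 0 < 1); have lt02 := block_corner_lt (isT : 0 < 2).
  have lt12 := block_corner_lt (isT : 1 < 2).
  have : [|| apart x (block_corner a 0), apart x (block_corner a 1)
           | apart x (block_corner a 2)] by rewrite /apart; lia.
  case/or3P => ax; apply/hasP; [exists (block_corner a 0) | exists (block_corner a 1) |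
    exists (block_corner a 2)] => //; apply: block_corner_in; lia.
have : [|| apart x (0, 0), apart x (0, 1), apart x (1, 2) | apart x (1, 3)].
  by rewrite /apart /=; lia.
case/or4P => ax; apply/hasP; [exists (0, 0) | exists (0, 1) | exists (1, 2) | exists (1, 3)] => //;
  by rewrite mem_block_code a1 b0; lia.
Qed.

Lemma block_code_certificate n m :
  a + 2 * b + minn w 1 <= n <= (a + 2 * b + minn w 1).+1 ->
  2 * a + b + w <= m <= (2 * a + b + w).+1 ->
  (w = 1 -> a + 2 * b + 1 = n \/ 2 * a + b + 1 = m) ->
  3 <= a + b + minn w 1 \/ [/\ a = 1, b = 0 & 2 <= w] ->
  well_placed n m s && ld_certificate n m s.
Proof.
move=> rows_n cols_m lone_line spread.
apply/andP; split.
  rewrite /well_placed uniq_block_code.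
  by apply/allP => -[r c]; rewrite mem_block_code /=; lia.
apply/and5P; split.
- apply/allP => r; rewrite mem_iota => r_lt; apply/hasP.
  have [r_a | a_r] := ltnP r a; first by exists (r, 2 * r); rewrite ?mem_block_code /=; lia.
  have [r_b | b_r] := ltnP r (a + 2 * b).
    by exists (r, 2 * a + (r - a) %/ 2); rewrite ?mem_block_code /=; lia.
  by exists (a + 2 * b, 2 * a + b); rewrite ?mem_block_code /=; lia.
- apply/allP => c; rewrite mem_iota => c_lt; apply/hasP.
  have [c_a | a_c] := ltnP c (2 * a); first by exists (c %/ 2, c); rewrite ?mem_block_code /=; lia.
  have [c_b | b_c] := ltnP c (2 * a + b).
    by exists (a + 2 * (c - 2 * a), c); rewrite ?mem_block_code /=; lia.
  by exists (a + 2 * b, c); rewrite ?mem_block_code /=; lia.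
- apply/allP => -[r c] rcs; apply/allP => -[r' c'] rcs'; apply/implyP => /andP [lone_rc lone_rc'].
  have := lone_block_code rcs lone_rc; have := lone_block_code rcs' lone_rc'.
  by rewrite xpair_eqE; lia.
- apply/allP => -[r c] rcs; apply/implyP => /(lone_block_code rcs) [_ [_ w1]].
  by case: (lone_line w1) => last_line; apply/orP; [left | right]; apply/hasP;
    exists (a + 2 * b, 2 * a + b); rewrite ?mem_block_code /=; lia.
by apply/allP => r _; apply/allP => c _; rewrite block_code_dominates ?orbT.
Qed.

End BlockCode.

Lemma exists_ld_block n m a b w k :
  a + 2 * b + minn w 1 <= n <= (a + 2 * b + minn w 1).+1 ->
  2 * a + b + w <= m <= (2 * a + b + w).+1 ->
  (w = 1 -> a + 2 * b + 1 = n \/ 2 * a + b + 1 = m) ->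
  3 <= a + b + minn w 1 \/ [/\ a = 1, b = 0 & 2 <= w] ->
  2 * a + 2 * b + w = k ->
  exists2 C : {set 'I_n * 'I_m}, locating_dominating (KxK n m) C & #|C| = k.
Proof.
move=> rows_n cols_m lone_line spread <-; rewrite -(size_block_code a b w).
case/andP: (block_code_certificate rows_n cols_m lone_line spread) => placed cert.
by apply: exists_ld_code => //; case: spread => [|[]]; lia.
Qed.

Lemma exists_ld_wide n m : 2 <= n -> 2 * n <= m -> ~ (n = 2 /\ m = 4) ->
  exists2 C : {set 'I_n * 'I_m}, locating_dominating (KxK n m) C & #|C| = m - 1.
Proof.
move=> n2 wide not24; apply: (@exists_ld_block _ _ n.-1 0 (m - 2 * n + 1)); try lia.
have [n3|n2'] := ltnP 2 n; [left | right; split]; lia.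
Qed.

Lemma exists_ld_balanced n m : 2 < n -> n <= m < 2 * n -> ~ (n = 4 /\ m = 4) ->
  exists2 C : {set 'I_n * 'I_m},
    locating_dominating (KxK n m) C & #|C| = (2 * n + 2 * m + 1) %/ 3 - 1.
Proof.
move=> n3 /andP [nm m2n] not44.
have [n3'|n4] := ltnP n 4.
  have -> : n = 3 by lia.
  have [m3|m4] := ltnP m 4.
    have -> : m = 3 by lia.
    exact: (@exists_ld_code 3 3 [:: (0, 0); (0, 1); (1, 0)]).
  by apply: (@exists_ld_block _ _ 1 0 2); try lia; right.
have := ltn_pmod (n + m) (isT : 0 < 3).
case residue: ((n + m) %% 3) => [|[|[|k]]] // _.
- apply: (@exists_ld_block _ _ ((2 * m - n - 3) %/ 3) ((2 * n - m) %/ 3) 1); lia.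
- apply: (@exists_ld_block _ _ ((2 * m - n - 2) %/ 3) ((2 * n - m + 1) %/ 3) 0); lia.
apply: (@exists_ld_block _ _ ((2 * m - n - 1) %/ 3) ((2 * n - m - 1) %/ 3) 0); lia.
Qed.

Lemma exists_ld_2xm m : 2 <= m <= 4 ->
  exists2 C : {set 'I_2 * 'I_m}, locating_dominating (KxK 2 m) C & #|C| = m.
Proof.
case: m => [|[|[|[|[|m]]]]] //= _.
- exact: (@exists_ld_code 2 2 [:: (0, 0); (0, 1)]).
- exact: (@exists_ld_code 2 3 [:: (0, 0); (0, 1); (1, 0)]).
by apply: (@exists_ld_block _ _ 1 0 2); try lia; right.
Qed.

Lemma exists_ld_4x4 :
  exists2 C : {set 'I_4 * 'I_4}, locating_dominating (KxK 4 4) C & #|C| = 5.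
Proof. exact: (@exists_ld_code 4 4 [:: (0, 0); (0, 1); (1, 2); (1, 3); (2, 0)]). Qed.

Theorem theorem15 (n m : nat) :
  (2 <= n)%N -> (n <= m)%N ->
  (((2 * n <= m)%N /\ ~ (n = 2 /\ m = 4) -> gammaLD (KxK n m) = (m - 1)%N) /\
  ((2 < n)%N /\ (m < 2 * n)%N /\ ~ (n = 4 /\ m = 4) ->
     gammaLD (KxK n m) = ((2 * n + 2 * m - 1 + 2) %/ 3 - 1)%N) /\
  (n = 2 /\ (m <= 4)%N -> gammaLD (KxK n m) = m) /\
  (n = 4 /\ m = 4 -> gammaLD (KxK n m) = 5)).
Proof.
move=> n2 nm; have [n0 m0] : 0 < n /\ 0 < m by lia.
split; [|split; [|split]].
- case=> wide not24; apply: gammaLD_eq; first exact: exists_ld_wide.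
  by move=> C ldC; exact: (ld_card_lb_cols n0 m0 ldC).
- case=> n3 [m2n not44]; have -> : 2 * n + 2 * m - 1 + 2 = 2 * n + 2 * m + 1 by lia.
  apply: gammaLD_eq; first by apply: exists_ld_balanced; rewrite ?nm.
  move=> C ldC; have : 2 * n + 2 * m <= 3 * #|C| + 4 := ld_card_lb_lines n0 m0 ldC; lia.
- case=> n_2 m4; subst n; apply: gammaLD_eq; first by apply: exists_ld_2xm; rewrite nm.
  move=> C ldC; have : m - 1 <= #|C| := ld_card_lb_cols n0 m0 ldC.
  have : #|C| < m -> 3 < #|C| := ld_card_lb_2xm ldC; lia.
case=> n4 m4; subst n m; apply: gammaLD_eq; first exact: exists_ld_4x4.
by move=> C ldC; exact: (ld_card_lb_4x4 n0 m0 ldC).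
Qed.
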